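(* Let $n\ge 3$, let $K$ be a proper $4$-coloring of $G=H_2(n,n-1)$, and let $x_1,x_2,x_3,x_4$ be distinct vertices such that $(x_1,x_2),(x_2,x_3),(x_3,x_4),(x_4,x_1)$ are all transition edges for $K$. Then: (a) the colors $K(x_1),\dots,K(x_4)$ are pairwise distinct; (b) every vertex $y\notin\{x_1,\dots,x_4\}$ is adjacent to at most one of $x_1,\dots,x_4$, and if $y$ is adjacent to $x_i$ then $K(y)=K(\tilde{x}_i)$, where $\tilde{x}_i$ is the vertex opposite to $x_i$ on the cycle (i.e. $\tilde{x}_1=x_3$, $\tilde{x}_3=x_1$, $\tilde{x}_2=x_4$, $\tilde{x}_4=x_2$).
   Context: $H_2(n,n-1)$ is the simple undirected graph with vertex set $\mathbb{Z}_2^n$ in which $x,y$ are adjacent iff their Hamming distance is at least $n-1$. For a proper $k$-coloring $K$ of a simple graph, an edge $(x,y)$ is a transition edge for $K$ if swapping the colors of $x$ and $y$ (all other colors unchanged) yields again a proper $k$-coloring. *)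

From mathcomp Require Import all_boot.
Set Implicit Arguments. Unset Strict Implicit. Unset Printing Implicit Defensive.

Definition vert (n : nat) := {ffun 'I_n -> bool}.

Definition hdist (n : nat) (x y : vert n) : nat := #|[set i | x i != y i]|.

(* Adjacency in H_2(n,n-1): distinct and Hamming distance at least n-1
   (for n >= 3 distance >= n-1 already forces x != y). *)
Definition hadj (n : nat) (x y : vert n) : bool := (x != y) && (n.-1 <= hdist x y).

Definition proper_col (n k : nat) (K : vert n -> 'I_k) : Prop :=
  forall x y, hadj x y -> K x != K y.

Definition swap_col (n k : nat) (K : vert n -> 'I_k) (x y : vert n) : vert n -> 'I_k :=
  fun z => if z == x then K y else if z == y then K x else K z.

Definition transition_edge (n k : nat) (K : vert n -> 'I_k) (x y : vert n) : Prop :=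
  hadj x y /\ proper_col (swap_col K x y).

From mathcomp Require Import all_boot.

Set Implicit Arguments.
Unset Strict Implicit.
Unset Printing Implicit Defensive.

(* If (x, y) is a transition edge, then after the swap y carries the color
   K x, so every neighbour of y other than x avoids K x, and symmetrically.
   Around the 4-cycle this separates opposite vertices, so the four colors are
   distinct.  A neighbour y of x1 outside the cycle avoids K x1 by properness
   and K x2, K x4 by the two transition edges at x1, which leaves K x3.  As
   x_i |-> K (opposite of x_i) is injective, y has at most one neighbour on
   the cycle. *)

Lemma hadj_sym n : symmetric (@hadj n).
Proof.
move=> x y; rewrite /hadj /hdist eq_sym; congr (_ && (_ <= _)).
by apply: eq_card => i; rewrite !inE eq_sym.
Qed.

Lemma hadj_neq n (x y : vert n) : hadj x y -> x != y.
Proof. by case/andP. Qed.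

Section TransitionEdge.

Variables (n k : nat) (K : vert n -> 'I_k).

Lemma swap_colC (x y : vert n) : x != y -> swap_col K x y =1 swap_col K y x.
Proof.
move=> neq_xy z; rewrite /swap_col.
by case: (eqVneq z x) => [->|//]; rewrite (negbTE neq_xy).
Qed.

Lemma transition_edge_sym (x y : vert n) :
  transition_edge K x y -> transition_edge K y x.
Proof.
case=> adj_xy swap_proper; split; first by rewrite hadj_sym.
have neq_yx : y != x by rewrite eq_sym hadj_neq.
move=> u v adj_uv; rewrite (swap_colC neq_yx u) (swap_colC neq_yx v).
exact: swap_proper.
Qed.

Lemma transition_edge_nbr (x y z : vert n) :
  transition_edge K x y -> hadj y z -> z != x -> K x != K z.
Proof.
case=> adj_xy swap_proper adj_yz neq_zx; have := swap_proper y z adj_yz.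
have neq_yx : y != x by rewrite eq_sym hadj_neq.
have neq_zy : z != y by rewrite eq_sym hadj_neq.
by rewrite /swap_col eqxx (negbTE neq_yx) (negbTE neq_zx) (negbTE neq_zy).
Qed.

End TransitionEdge.

Lemma mem_uniq_full (T : finType) (s : seq T) (x : T) :
  uniq s -> size s = #|T| -> x \in s.
Proof.
move=> /card_uniqP s_uniq s_size; apply/negPn/negP => xNs.
have := cardC (mem s); rewrite s_uniq s_size -[X in _ = X]addn0 => /addnI.
by move/card0_eq/(_ x); rewrite !inE xNs.
Qed.

Lemma ord4_remaining (a b c d y : 'I_4) :
  uniq [:: a; b; c; d] -> y \notin [:: a; b; d] -> y = c.
Proof.
move=> abcd_uniq; have := mem_uniq_full y abcd_uniq (esym (card_ord 4)).
by rewrite !inE; case/or4P=> /eqP->; rewrite ?eqxx ?orbT.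
Qed.

Lemma count_le1_all2 (T U : eqType) (a : pred T) (f : T -> U) (u : U)
    (s t : seq T) :
  uniq (map f t) -> all2 (fun x z => a x ==> (f z == u)) s t ->
  count a s <= 1.
Proof.
suff: uniq (map f t) -> all2 (fun x z => a x ==> (f z == u)) s t ->
    count a s <= (u \in map f t).
  by move=> le_count ft_uniq st_rel; apply: leq_trans (le_count _ _) (leq_b1 _).
elim: s t => [|x s IHs] [|z t] //= /andP[fzNt ft_uniq].
case/andP=> /implyP ax_fz st_rel.
have := IHs t ft_uniq st_rel; rewrite inE.
case: (boolP (a x)) ax_fz => [_ /(_ isT)/eqP <- | _ _].
  by rewrite (negbTE fzNt) eqxx leqn0 => /eqP->.
move=> /= le_rest; apply: leq_trans le_rest _.
by case: (u == f z); rewrite ?leq_b1.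
Qed.

Section TransitionCycle.

Variables (n : nat) (K : vert n -> 'I_4) (x1 x2 x3 x4 : vert n).
Hypotheses (K_proper : proper_col K) (x_uniq : uniq [:: x1; x2; x3; x4]).
Hypotheses (T12 : transition_edge K x1 x2) (T23 : transition_edge K x2 x3).
Hypotheses (T34 : transition_edge K x3 x4) (T41 : transition_edge K x4 x1).

Lemma transition_cycle_opposite_color : K x1 != K x3.
Proof.
apply: (transition_edge_nbr T12 T23.1).
move: x_uniq; rewrite /= !inE !negb_or => /and4P[/and3P[_ neq13 _] _ _ _].
by rewrite eq_sym.
Qed.

Lemma transition_cycle_colors_uniq : uniq [:: K x1; K x2; K x3; K x4].
Proof.
have k13 := transition_cycle_opposite_color.
have k24 : K x2 != K x4.
  apply: (transition_edge_nbr T23 T34.1).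
  move: x_uniq; rewrite /= !inE !negb_or => /and4P[_ /andP[_ neq24] _ _].
  by rewrite eq_sym.
rewrite /= !inE !negb_or k13 k24 (K_proper T12.1) (K_proper T23.1).
by rewrite (K_proper T34.1) eq_sym (K_proper T41.1).
Qed.

Lemma transition_cycle_nbr_color (y : vert n) :
  y \notin [:: x1; x2; x3; x4] -> hadj y x1 -> K y = K x3.
Proof.
rewrite !inE => /norP[_ /norP[y2 /norP[_ y4]]] adj_y1.
rewrite hadj_sym in adj_y1.
apply: (ord4_remaining transition_cycle_colors_uniq).
rewrite !inE !negb_or ![K y == _]eq_sym (K_proper adj_y1).
rewrite (transition_edge_nbr (transition_edge_sym T12) adj_y1 y2).
by rewrite (transition_edge_nbr T41 adj_y1 y4).
Qed.

End TransitionCycle.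

Theorem lemma5p6 (n : nat) (K : vert n -> 'I_4) (x1 x2 x3 x4 : vert n) :
  3 <= n ->
  proper_col K ->
  uniq [:: x1; x2; x3; x4] ->
  transition_edge K x1 x2 -> transition_edge K x2 x3 ->
  transition_edge K x3 x4 -> transition_edge K x4 x1 ->
  uniq [:: K x1; K x2; K x3; K x4] /\
  (forall y : vert n, y \notin [:: x1; x2; x3; x4] ->
     (count (hadj y) [:: x1; x2; x3; x4] <= 1) /\
     (hadj y x1 -> K y = K x3) /\ (hadj y x2 -> K y = K x4) /\
     (hadj y x3 -> K y = K x1) /\ (hadj y x4 -> K y = K x2)).
Proof.
move=> _ K_proper x_uniq T12 T23 T34 T41.
have colors_uniq := transition_cycle_colors_uniq K_proper x_uniq T12 T23 T34 T41.
split=> // y yNx.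
have rot_uniq1 (s : seq (vert n)) : uniq s -> uniq (rot 1 s) by rewrite rot_uniq.
have rot_notin1 (s : seq (vert n)) : y \notin s -> y \notin rot 1 s by rewrite mem_rot.
have x_uniq2 := rot_uniq1 _ x_uniq; have x_uniq3 := rot_uniq1 _ x_uniq2.
have x_uniq4 := rot_uniq1 _ x_uniq3.
have yNx2 := rot_notin1 _ yNx; have yNx3 := rot_notin1 _ yNx2.
have yNx4 := rot_notin1 _ yNx3.
have c1 := transition_cycle_nbr_color K_proper x_uniq T12 T23 T34 T41 yNx.
have c2 := transition_cycle_nbr_color K_proper x_uniq2 T23 T34 T41 T12 yNx2.
have c3 := transition_cycle_nbr_color K_proper x_uniq3 T34 T41 T12 T23 yNx3.
have c4 := transition_cycle_nbr_color K_proper x_uniq4 T41 T12 T23 T34 yNx4.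
split=> //; apply: (count_le1_all2 (f := K) (u := K y) (t := [:: x3; x4; x1; x2])).
  by rewrite -(rot_uniq 2).
by rewrite /= !andbT; apply/and4P; split; apply/implyP;
  [move/c1 | move/c2 | move/c3 | move/c4] => ->.
Qed.
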